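(* Let $K\ge2$, let $a\in\Delta^{K-1}$ with $a(i)>0$ for all $i\in[K]$, let $T_0\in\mathbb N$, and let $\tau_{T_0}\in\mathbb Z_{\ge0}^K$ with $\sum_i\tau_{T_0}(i)=T_0$. For $t\ge T_0$ define recursively $\tau_{t+1}=\tau_t+e_{A_{t+1}}$, where $A_{t+1}\in\arg\max_{i\in[K]}\{t\,a(i)-\tau_t(i)\}$ (ties broken arbitrarily) and $e_j$ is the $j$-th standard basis vector. Then there exists a finite $T'\ge T_0$ such that for all $t\ge T'$ and all $i\in[K]$: $\tau_t(i)/t\le a(i)+1/t$ (the set of over-sampled arms $\{i:\tau_t(i)/t>a(i)+1/t\}$ is empty), and $$\Big|\frac{\tau_t(i)}{t}-a(i)\Big|<\frac{K}{t}.$$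
   Context: $\Delta^{K-1}=\{a\in[0,1]^K:\sum_i a(i)=1\}$. $\tau_t(i)$ counts how many of the first $t$ selections were arm $i$, so $\sum_i\tau_t(i)=t$. *)

From mathcomp Require Import all_boot all_order all_algebra.
From mathcomp Require Import reals.
Set Implicit Arguments. Unset Strict Implicit. Unset Printing Implicit Defensive.
Import Order.TTheory GRing.Theory Num.Theory.
Local Open Scope ring_scope.

Definition tracking_step (R : realType) (K : nat) (a : 'I_K -> R) (t : nat)
  (taut taut1 : 'I_K -> nat) : Prop :=
  exists A : 'I_K,
    (forall j : 'I_K, t%:R * a j - (taut j)%:R <= t%:R * a A - (taut A)%:R)
    /\ (forall j : 'I_K, taut1 j = (taut j + (j == A))%N).

From mathcomp Require Import all_boot all_order all_algebra.
From mathcomp Require Import reals.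
From mathcomp Require Import lra.
Set Implicit Arguments. Unset Strict Implicit. Unset Printing Implicit Defensive.
Import Order.TTheory GRing.Theory Num.Theory.
Local Open Scope ring_scope.

(* Track the deficits d_t(i) = t a(i) - tau_t(i).  They sum to 0, so the
   arm selected at each step, having the largest deficit, has a nonnegative
   one.  Hence a deficit above -1 stays above -1 (it drops by at most
   1 - a(i) < 1, and only from a nonnegative value), while a deficit at most
   -1 is never selected and grows by a(i) at each step, so after finitely many
   steps every deficit exceeds -1.  Since the deficits sum to 0, each of them
   is then at most K - 1, and dividing -1 < d_t(i) <= K - 1 by t gives both
   bounds. *)

Definition deficit (R : realType) (K : nat) (a : 'I_K -> R) (t : nat)
  (taut : 'I_K -> nat) (i : 'I_K) : R :=
  t%:R * a i - (taut i)%:R.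

Lemma argmax_ge0_of_sum0 (R : numDomainType) (K : nat) (f : 'I_K -> R)
    (A : 'I_K) :
  (forall j, f j <= f A) -> \sum_(j < K) f j = 0 -> 0 <= f A.
Proof.
move=> fA_max sum0.
have K_gt0 : (0 < K)%N by apply: leq_ltn_trans (ltn_ord A).
have : \sum_(j < K) f j <= f A *+ K.
  by rewrite -[K in f A *+ K]card_ord -sumr_const; apply: ler_sum.
by rewrite sum0 pmulrn_lge0.
Qed.

Lemma le_card_sub1_of_sum0 (R : realDomainType) (K : nat) (f : 'I_K -> R)
    (i : 'I_K) :
  (forall j, -1 <= f j) -> \sum_(j < K) f j = 0 -> f i <= K%:R - 1.
Proof.
move=> f_ge sum0.
have : \sum_(j < K) (f j + 1) = K%:R.
  by rewrite big_split /= sum0 sumr_const card_ord add0r.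
rewrite (bigD1 i) //= => sum_shift.
have : 0 <= \sum_(j < K | j != i) (f j + 1).
  by apply: sumr_ge0 => j _; have := f_ge j; lra.
have := f_ge i; lra.
Qed.

Lemma ex_nat_mul_gt (R : archiRealFieldType) (K : nat) (a b : 'I_K -> R) :
  (forall i, 0 < a i) ->
  exists N : nat, forall t : nat, (N <= t)%N -> forall i, b i < t%:R * a i.
Proof.
move=> a_gt0.
exists (\max_(i < K) Num.Def.archi_bound (`|b i| / a i))%N => t N_le_t i.
have bound_lt := archi_boundP (divr_ge0 (normr_ge0 (b i)) (ltW (a_gt0 i))).
have bound_le : (Num.Def.archi_bound (`|b i| / a i) <= t)%N.
  by apply: leq_trans N_le_t; apply: (leq_bigmax i).
have : `|b i| / a i < t%:R by apply: (lt_le_trans bound_lt); rewrite ler_nat.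
by rewrite ltr_pdivrMr // => /(le_lt_trans (ler_norm (b i))).
Qed.

Section TrackingStep.
Variables (R : realType) (K : nat) (a : 'I_K -> R) (t : nat).
Variables (taut taut1 : 'I_K -> nat).
Hypothesis step : tracking_step a t taut taut1.

Lemma tracking_step_sum :
  (\sum_(i < K) taut1 i = (\sum_(i < K) taut i).+1)%N.
Proof.
have [A [_ taut1E]] := step.
rewrite (eq_bigr _ (fun j _ => taut1E j)) big_split /= -addn1.
by congr (_ + _)%N; rewrite (bigD1 A) //= eqxx big1 // => j /negPf ->.
Qed.

Hypothesis sum_taut : (\sum_(i < K) taut i)%N = t.
Hypothesis sum_a : \sum_(i < K) a i = 1.

Lemma sum_deficit : \sum_(i < K) deficit a t taut i = 0.
Proof.
by rewrite sumrB -mulr_sumr sum_a -natr_sum sum_taut mulr1 subrr.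
Qed.

Lemma deficit_tracking_step (i : 'I_K) :
  (taut1 i = taut i /\ deficit a t.+1 taut1 i = deficit a t taut i + a i)
  \/ (0 <= deficit a t taut i
      /\ deficit a t.+1 taut1 i = deficit a t taut i + a i - 1).
Proof.
have [A [A_max taut1E]] := step.
have [-> | ne_iA] := eqVneq i A; last first.
  left; rewrite /deficit taut1E (negPf ne_iA) addn0 -[t.+1]addn1 natrD mulrDl.
  by split=> //; lra.
right; split; first exact: (argmax_ge0_of_sum0 A_max sum_deficit).
rewrite /deficit taut1E eqxx -[t.+1]addn1 !natrD mulrDl mul1r.
by rewrite [true%:R]/=; lra.
Qed.

End TrackingStep.

Section TrackingRule.
Variables (R : realType) (K : nat) (a : 'I_K -> R).
Variables (T0 : nat) (tau : nat -> 'I_K -> nat).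
Hypothesis a_gt0 : forall i, 0 < a i.
Hypothesis sum_a : \sum_(i < K) a i = 1.
Hypothesis sum_tau_T0 : (\sum_(i < K) tau T0 i)%N = T0.
Hypothesis step : forall t, (T0 <= t)%N -> tracking_step a t (tau t) (tau t.+1).

Let d t := deficit a t (tau t).

Lemma sum_tau (t : nat) : (T0 <= t)%N -> (\sum_(i < K) tau t i)%N = t.
Proof.
move=> /subnK <-; elim: (t - T0)%N => [|n IH] //.
by rewrite addSn (tracking_step_sum (step (leq_addl _ _))) IH.
Qed.

Lemma deficit_gt_m1_or_tau_const (i : 'I_K) (t : nat) :
  (T0 <= t)%N -> -1 < d t i \/ tau t i = tau T0 i.
Proof.
move=> /subnK <-; elim: (t - T0)%N => [|n IH]; first by right.
have T0_le := leq_addl n T0.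
have := deficit_tracking_step (step T0_le) (sum_tau T0_le) sum_a i.
rewrite /d in IH *; rewrite addSn; have := a_gt0 i.
case: IH => [d_gt | tau_eq] ai_gt0 [[tau_eq' d_eq] | [d_ge0 d_eq]].
- by left; rewrite d_eq; lra.
- by left; rewrite d_eq; lra.
- by right; rewrite tau_eq'.
- by left; rewrite d_eq; lra.
Qed.

Lemma eventually_deficit_gt_m1 :
  exists N : nat, forall t : nat, (T0 + N <= t)%N -> forall i, -1 < d t i.
Proof.
have [N N_gt] := ex_nat_mul_gt (fun i => (tau T0 i)%:R - 1) a_gt0.
exists N => t le_t i.
have T0_le : (T0 <= t)%N by apply: leq_trans le_t; apply: leq_addr.
have N_le : (N <= t)%N by apply: leq_trans le_t; apply: leq_addl.
have [//|tau_eq] := deficit_gt_m1_or_tau_const i T0_le.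
by have := N_gt t N_le i; rewrite /d /deficit tau_eq; lra.
Qed.

Lemma eventually_deficit_bounds :
  exists T' : nat, (T0 <= T')%N /\ (0 < T')%N /\
    forall t : nat, (T' <= t)%N -> forall i, -1 < d t i <= K%:R - 1.
Proof.
have [N d_gt] := eventually_deficit_gt_m1.
exists (T0 + N).+1; split; first by rewrite ltnW // ltnS leq_addr.
split=> // t le_t i.
have T0_le : (T0 <= t)%N.
  by apply: leq_trans le_t; rewrite ltnW // ltnS leq_addr.
have d_gt_t := d_gt t (ltnW le_t).
rewrite d_gt_t /=; apply: le_card_sub1_of_sum0 => [j|].
  exact/ltW/d_gt/ltnW.
exact: sum_deficit (sum_tau T0_le) sum_a.
Qed.

End TrackingRule.

Lemma ratio_le_add_inv (R : realFieldType) (t : nat) (x c : R) :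
  (0 < t)%N -> -1 <= t%:R * c - x -> x / t%:R <= c + 1 / t%:R.
Proof.
move=> t_gt0 ge_m1; have t_pos : (0 : R) < t%:R by rewrite ltr0n.
by rewrite ler_pdivrMr // mulrDl mul1r mulVf ?gt_eqF //; lra.
Qed.

Lemma ratio_dist_lt (R : realFieldType) (t : nat) (x c k : R) :
  (0 < t)%N -> `|t%:R * c - x| < k -> `|x / t%:R - c| < k / t%:R.
Proof.
move=> t_gt0 dist_lt; have t_pos : (0 : R) < t%:R by rewrite ltr0n.
have -> : x / t%:R - c = - (t%:R * c - x) / t%:R.
  by rewrite mulNr mulrBl mulrAC divff ?gt_eqF // mul1r opprB.
by rewrite normrM normrN normfV (gtr0_norm t_pos) ltr_pM2r ?invr_gt0.
Qed.

Theorem mainTheorem12 (R : realType) (K : nat) (a : 'I_K -> R)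
  (T0 : nat) (tau : nat -> 'I_K -> nat) :
  (2 <= K)%N ->
  (forall i, 0 < a i) ->
  \sum_(i < K) a i = 1 ->
  (\sum_(i < K) tau T0 i)%N = T0 ->
  (forall t, (T0 <= t)%N -> tracking_step a t (tau t) (tau t.+1)) ->
  exists T' : nat, (T0 <= T')%N /\
    forall t : nat, (T' <= t)%N -> forall i : 'I_K,
      (tau t i)%:R / t%:R <= a i + 1 / t%:R /\
      `|(tau t i)%:R / t%:R - a i| < K%:R / t%:R.
Proof.
move=> K_ge2 a_gt0 sum_a sum_tau_T0 step.
have [T' [T0_le [T'_gt0 d_bounds]]] :=
  eventually_deficit_bounds a_gt0 sum_a sum_tau_T0 step.
exists T'; split=> // t le_t i.
have t_gt0 : (0 < t)%N by apply: leq_trans le_t.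
have /andP[d_gt d_lt] := d_bounds t le_t i.
rewrite /deficit in d_gt d_lt.
have K_gt1 : (1 : R) < K%:R by rewrite ltr1n.
split; first by apply: ratio_le_add_inv => //; lra.
by apply: ratio_dist_lt => //; rewrite ltr_norml; apply/andP; split; lra.
Qed.
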